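(* Let $R\ge2$, $\nu\in\mathbb{R}$, $m\in\mathbb{Z}$, and suppose $x_0:=\sqrt{\nu^2+m^2}/(4\pi R)\in[1/4,4]$. For $b>a>0$ define $$I(a,b)=\int_a^b\int_0^{2\pi}e(2Rx\cos\phi)\,e^{im\phi}\,x^{i\nu-1}\,d\phi\,dx.$$ Then for all $b>a\ge1/8$, $I(a,b)\ll\log R/R$, with an absolute implied constant.
   Context: $e(x)=e^{2\pi i x}$. *)

From Stdlib Require Import Reals.
From Coquelicot Require Import Coquelicot.
Open Scope R_scope.

Definition Cexp (z : C) : C :=
  Cmult (RtoC (exp (Re z))) (cos (Im z), sin (Im z)).

Definition e (x : R) : C := Cexp (0, 2 * PI * x).

Definition Cpow_pos (x : R) (s : C) : C := Cexp (Cmult s (RtoC (ln x))).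

(* RInt is taken in C viewed as a complete normed R-module (componentwise Riemann integral).
   I(a,b) = int_a^b int_0^{2pi} e(2Rx cos phi) e^{i m phi} x^{i nu - 1} dphi dx *)
Definition Iab (R0 nu : R) (m : Z) (a b : R) : C :=
  @RInt C_R_CompleteNormedModule (fun x : R =>
    @RInt C_R_CompleteNormedModule (fun phi : R =>
      Cmult (Cmult (e (2 * R0 * x * cos phi)) (Cexp (0, IZR m * phi)))
            (Cpow_pos x (-1, nu))) 0 (2 * PI)) a b.

(* Substituting x = e^t and writing K = 4 pi R, the integrand of I(a,b) times
   dx becomes e^{i Psi(t,phi)} dt, with phase
       Psi(t,phi) = K e^t cos phi + nu t + m phi,
   so the real and imaginary parts of I(a,b) are the double integrals of
   cos (Psi + c), c = 0 and c = -pi/2, over [ln a, ln b] x [0, 2 pi].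
   With (P, Q) = (d_t Psi, d_phi Psi) and the regularised norm
   N = P^2 + Q^2 + lambda (lambda > 0) one has the exact identity
       cos Psi = d_t (P sin Psi / N) + d_phi (Q sin Psi / N) + Z,
   |Z| <= (lambda + 2 K e^t) / N.  The phi-derivative integrates to zero by
   periodicity (m is an integer), the t-derivative leaves two boundary terms
   bounded by the phi-integral of N^{-1/2}, and Z is integrated directly.
   Writing (nu, m) = K x0 (-cos phi0, sin phi0) and lambda = K^2 mu,
   N / K^2 = (e^t - x0)^2 + 2 x0 e^t (1 - cos (phi - phi0)) + mu,
   so every bound reduces to an explicit one-variable integral (an arcsinh or
   an arctangent).  The boundary terms are O(log(1/mu) / K), the Z-term is
   O((mu + 1/K) log(1/mu)), and mu = 1/R gives O(log R / R). *)

From Stdlib Require Import Reals Lra ZArith.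
From Coquelicot Require Import Coquelicot.
Open Scope R_scope.

Lemma ex_RInt_cont (f : R -> R) a b :
  (forall z, Rmin a b <= z <= Rmax a b -> continuous f z) -> ex_RInt f a b.
Proof. apply (ex_RInt_continuous (V:=R_CompleteNormedModule)). Qed.

Lemma RInt_plusR (f g : R -> R) a b : ex_RInt f a b -> ex_RInt g a b ->
  RInt (fun x => f x + g x) a b = RInt f a b + RInt g a b.
Proof. apply (RInt_plus (V:=R_CompleteNormedModule)). Qed.

Lemma RInt_minusR (f g : R -> R) a b : ex_RInt f a b -> ex_RInt g a b ->
  RInt (fun x => f x - g x) a b = RInt f a b - RInt g a b.
Proof. apply (RInt_minus (V:=R_CompleteNormedModule)). Qed.

Lemma RInt_scalR (f : R -> R) a b l : ex_RInt f a b ->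
  RInt (fun x => l * f x) a b = l * RInt f a b.
Proof. apply (RInt_scal (V:=R_CompleteNormedModule)). Qed.

Lemma RInt_ChaslesR (f : R -> R) a b c : ex_RInt f a b -> ex_RInt f b c ->
  RInt f a b + RInt f b c = RInt f a c.
Proof. apply (RInt_Chasles (V:=R_CompleteNormedModule)). Qed.

Lemma RInt_extR (f g : R -> R) a b :
  (forall x, Rmin a b < x < Rmax a b -> f x = g x) -> RInt f a b = RInt g a b.
Proof. apply (RInt_ext (V:=R_CompleteNormedModule)). Qed.

Lemma RInt_FTC (f df : R -> R) a b :
  (forall x, Rmin a b <= x <= Rmax a b -> is_derive f x (df x)) ->
  (forall x, Rmin a b <= x <= Rmax a b -> continuous df x) ->
  RInt df a b = f b - f a.
Proof.
  intros Hd Hc. apply is_RInt_unique.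
  apply (is_RInt_derive (V:=R_CompleteNormedModule)); auto.
Qed.

Lemma continuous_scalR (k : R) (f : R -> R) x : continuous f x -> continuous (fun y => k * f y) x.
Proof. apply (continuous_scal_r (K:=R_AbsRing) (V:=R_NormedModule)). Qed.

Lemma derivable_continuous (f : R -> R) x : ex_derive f x -> continuous f x.
Proof. apply (ex_derive_continuous (K:=R_AbsRing) (V:=R_NormedModule)). Qed.

Lemma RInt_nonneg_subinterval (f : R -> R) a b c d :
  a <= c -> c <= d -> d <= b ->
  (forall x, a <= x <= b -> continuous f x) -> (forall x, a <= x <= b -> 0 <= f x) ->
  RInt f c d <= RInt f a b.
Proof.
  intros Hac Hcd Hdb Hc Hp.
  assert (Hex : forall u v, a <= u -> u <= v -> v <= b -> ex_RInt f u v).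
  { intros u v Hu Huv Hv. apply ex_RInt_cont. intros z Hz.
    rewrite Rmin_left, Rmax_right in Hz by lra. apply Hc. lra. }
  rewrite <- (RInt_ChaslesR f a c b), <- (RInt_ChaslesR f c d b) by (apply Hex; lra).
  assert (0 <= RInt f a c) by (apply RInt_ge_0; auto; [apply Hex; lra | intros; apply Hp; lra]).
  assert (0 <= RInt f d b) by (apply RInt_ge_0; auto; [apply Hex; lra | intros; apply Hp; lra]).
  lra.
Qed.

Lemma exp_le_mono u v : u <= v -> exp u <= exp v.
Proof. intros [H | ->]; [left; apply exp_increasing | right]; auto. Qed.

Lemma c2_div (f g : R -> R -> R) x y :
  continuity_2d_pt f x y -> continuity_2d_pt g x y -> g x y <> 0 ->
  continuity_2d_pt (fun u v => f u v / g u v) x y.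
Proof.
  intros. unfold Rdiv. apply continuity_2d_pt_mult; auto.
  apply continuity_2d_pt_inv; auto.
Qed.

Lemma continuity_exp z : continuity_pt exp z.
Proof. apply derivable_continuous_pt, derivable_pt_exp. Qed.

Lemma continuity_pow n z : continuity_pt (fun y => y ^ n) z.
Proof. apply derivable_continuous_pt, derivable_pt_pow. Qed.

Ltac continuity_2d := repeat first
  [ apply c2_div
  | apply continuity_2d_pt_plus
  | apply continuity_2d_pt_minus
  | apply continuity_2d_pt_mult
  | apply continuity_2d_pt_opp
  | apply (continuity_1d_2d_pt_comp (fun y => y ^ _)); [apply continuity_pow|]
  | apply (continuity_1d_2d_pt_comp cos); [apply continuity_cos|]
  | apply (continuity_1d_2d_pt_comp sin); [apply continuity_sin|]
  | apply (continuity_1d_2d_pt_comp exp); [apply continuity_exp|]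
  | apply continuity_2d_pt_id1 | apply continuity_2d_pt_id2
  | apply continuity_2d_pt_const ].

Lemma continuous_section (f : R -> R -> R) y t :
  continuity_2d_pt f y t -> continuous (f y) t.
Proof.
  intro H. apply continuity_pt_filterlim. intros eps Heps.
  destruct (H (mkposreal eps Heps)) as [d Hd].
  exists d. split; [apply cond_pos |]. intros z [_ Hz].
  simpl. unfold R_dist in *. apply (Hd y z); [| exact Hz].
  rewrite Rminus_eq_0, Rabs_R0. apply cond_pos.
Qed.

(* Continuity of a parameter-dependent integral, from joint continuity of the
   integrand near the parameter (uniform continuity on a compact strip). *)
Lemma continuous_RInt_param (f : R -> R -> R) a b x r : a <= b -> 0 < r ->
  (forall y t, Rabs (y - x) < r -> a <= t <= b -> continuity_2d_pt f y t) ->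
  continuous (fun y => RInt (f y) a b) x.
Proof.
  intros Hab Hr H.
  assert (Hex : forall y, Rabs (y - x) < r -> ex_RInt (f y) a b).
  { intros y Hy. apply ex_RInt_cont. intros z Hz.
    rewrite Rmin_left, Rmax_right in Hz by lra. apply continuous_section, H; auto. }
  assert (Hx : Rabs (x - x) < r) by (rewrite Rminus_eq_0, Rabs_R0; lra).
  apply continuity_pt_filterlim. intros eps Heps.
  set (e' := eps / (b - a + 1)).
  assert (He' : 0 < e') by (unfold e'; apply Rdiv_lt_0_compat; lra).
  destruct (uniform_continuity_2d_1d' f a b x) with (eps := mkposreal e' He') as [d Hd].
  { intros t Ht. apply H; auto. }
  exists (Rmin d r). split; [apply Rmin_pos; [apply cond_pos | lra] |].
  intros y [_ Hy]. simpl in *. unfold R_dist in *.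
  assert (Hyd : Rabs (y - x) < d) by (eapply Rlt_le_trans; [exact Hy | apply Rmin_l]).
  assert (Hyr : Rabs (y - x) < r) by (eapply Rlt_le_trans; [exact Hy | apply Rmin_r]).
  rewrite <- RInt_minusR by auto.
  apply Rle_lt_trans with (RInt (fun _ => e') a b).
  - assert (Hc : forall t, a <= t <= b -> continuous (fun t => f y t - f x t) t).
    { intros t Ht. apply (continuous_minus (f y) (f x)); apply continuous_section, H; auto. }
    eapply Rle_trans; [apply abs_RInt_le; auto |].
    { apply ex_RInt_cont. intros z Hz. rewrite Rmin_left, Rmax_right in Hz by lra. auto. }
    apply RInt_le; auto.
    + apply ex_RInt_cont. intros z Hz. rewrite Rmin_left, Rmax_right in Hz by lra.
      apply (continuous_comp _ Rabs); auto. apply continuous_Rabs.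
    + apply ex_RInt_const.
    + intros t Ht. left. apply Rabs_lt_between in Hyd.
      apply (Hd t x t y); try lra. rewrite Rminus_eq_0, Rabs_R0. apply cond_pos.
  - rewrite RInt_const. unfold scal; simpl; unfold mult; simpl.
    apply Rlt_le_trans with ((b - a + 1) * e').
    + apply Rmult_lt_compat_r; lra.
    + right. unfold e'. field. lra.
Qed.

Lemma RInt_periodic_shift (G : R -> R) p :
  (forall x, continuous G x) -> (forall x, G (x + 2 * PI) = G x) ->
  RInt (fun t => G (t - p)) 0 (2 * PI) = RInt G (- PI) PI.
Proof.
  intros Hc Hp.
  assert (Hex : forall a b, ex_RInt G a b) by (intros; apply ex_RInt_cont; auto).
  assert (Htrans : forall a b s, RInt (fun t => G (t + s)) a b = RInt G (a + s) (b + s)).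
  { intros a b s. replace (a + s) with (1 * a + s) by ring. replace (b + s) with (1 * b + s) by ring.
    rewrite <- (RInt_comp_lin (V:=R_CompleteNormedModule)) by auto.
    apply RInt_extR. intros x _. unfold scal; simpl; unfold mult; simpl. rewrite !Rmult_1_l. reflexivity. }
  transitivity (RInt G (0 + - p) (2 * PI + - p)).
  { rewrite <- Htrans. reflexivity. }
  assert (Hwrap : RInt G PI (2 * PI - p) = RInt G (- PI) (- p)).
  { replace PI with (- PI + 2 * PI) at 1 by ring. replace (2 * PI - p) with (- p + 2 * PI) by ring.
    rewrite <- Htrans. apply RInt_extR. intros x _. apply Hp. }
  replace (2 * PI + - p) with (2 * PI - p) by ring. replace (0 + - p) with (- p) by ring.
  rewrite <- (RInt_ChaslesR G (- p) (- PI) (2 * PI - p)) by auto.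
  rewrite <- (RInt_ChaslesR G (- PI) PI (2 * PI - p)) by auto.
  rewrite Hwrap, <- (opp_RInt_swap (V:=R_CompleteNormedModule) G (- PI) (- p)) by auto.
  unfold opp; simpl. ring.
Qed.

Lemma sin_third u : 0 <= u <= PI / 2 -> u / 3 <= sin u.
Proof.
  intros Hu. assert (HP := PI_4).
  destruct (SIN u) as [Hlb _]; try lra.
  eapply Rle_trans; [| exact Hlb].
  unfold sin_lb, sin_approx, sin_term. simpl.
  assert (0 <= u * u <= 4) by nra.
  assert (0 <= u * ((2/3 - u * u / 6) + (u * u) * (u * u) * (1/120 - u * u / 5040))).
  { apply Rmult_le_pos; [lra |]. apply Rplus_le_le_0_compat; [lra |].
    apply Rmult_le_pos; [apply Rmult_le_pos |]; lra. }
  field_simplify. lra.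
Qed.

Lemma one_minus_cos_lower p : - PI <= p <= PI -> p ^ 2 / 18 <= 1 - cos p.
Proof.
  intros Hp.
  replace p with (2 * (p / 2)) at 2 by field. rewrite cos_2a_sin.
  assert ((p / 2) ^ 2 / 9 <= sin (p / 2) * sin (p / 2)).
  { destruct (Rle_or_lt 0 p).
    - assert (H1 := sin_third (p / 2) ltac:(lra)). nra.
    - assert (H1 := sin_third (- (p / 2)) ltac:(lra)). rewrite sin_neg in H1. nra. }
  nra.
Qed.

Lemma unit_circle_angle u v : u * u + v * v = 1 -> exists th, cos th = u /\ sin th = v.
Proof.
  intro H.
  assert (Hu : -1 <= u <= 1) by nra.
  assert (Hs : sqrt (1 - u²) = Rabs v).
  { rewrite <- sqrt_Rsqr_abs. f_equal. unfold Rsqr. lra. }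
  destruct (Rle_or_lt 0 v) as [Hv | Hv].
  - exists (acos u). rewrite cos_acos, sin_acos, Hs, Rabs_pos_eq by auto. auto.
  - exists (- acos u). rewrite cos_neg, sin_neg, cos_acos, sin_acos, Hs, Rabs_left by auto.
    split; [reflexivity | ring].
Qed.

Lemma sin_period_Z x (k : Z) : sin (x + 2 * PI * IZR k) = sin x.
Proof.
  destruct k as [| p | p].
  - rewrite Rmult_0_r, Rplus_0_r. reflexivity.
  - rewrite <- (positive_nat_Z p), <- INR_IZR_INZ.
    replace (x + 2 * PI * INR (Pos.to_nat p)) with (x + 2 * INR (Pos.to_nat p) * PI) by ring.
    apply sin_period.
  - rewrite <- Pos2Z.opp_pos, opp_IZR, <- (positive_nat_Z p), <- INR_IZR_INZ.
    pattern x at 2.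
    replace x with ((x + 2 * PI * - INR (Pos.to_nat p)) + 2 * INR (Pos.to_nat p) * PI) by ring.
    rewrite sin_period. reflexivity.
Qed.

Lemma RInt_inv_quadratic_bound p q L : 0 < p -> 0 < q ->
  RInt (fun u => / (p + q * u ^ 2)) (- L) L <= PI / sqrt (p * q).
Proof.
  intros Hp Hq.
  set (k := sqrt (q / p)).
  assert (Hk : 0 < k) by (apply sqrt_lt_R0, Rdiv_lt_0_compat; auto).
  assert (Hkk : k * k = q / p) by (apply sqrt_sqrt; left; apply Rdiv_lt_0_compat; auto).
  assert (Hden : forall u, 0 < p + q * u ^ 2) by (intro u; assert (0 <= u ^ 2) by apply pow2_ge_0; nra).
  assert (Hsq : sqrt (p * q) = p * k).
  { apply Rsqr_inj; [apply sqrt_pos | nra |].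
    rewrite Rsqr_sqrt by nra. unfold Rsqr.
    replace (p * k * (p * k)) with (p * p * (k * k)) by ring. rewrite Hkk. field. lra. }
  rewrite Hsq, (RInt_FTC (fun u => atan (k * u) / (p * k))).
  - assert (H1 := atan_bound (k * L)). assert (H2 := atan_bound (k * - L)).
    unfold Rdiv. rewrite <- Rmult_minus_distr_r.
    apply Rmult_le_compat_r; [left; apply Rinv_0_lt_compat; nra | lra].
  - intros x _. auto_derive; [nra |].
    replace q with (p * (k * k)) by (rewrite Hkk; field; lra).
    assert (0 <= (k * x) ^ 2) by apply pow2_ge_0.
    field. repeat split; nra.
  - intros x _. apply derivable_continuous. auto_derive. specialize (Hden x). lra.
Qed.

Lemma arcsinh_argument_pos s e w : 0 < s -> 0 < e -> 0 < sqrt s * w + sqrt (e + s * w ^ 2).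
Proof.
  intros Hs He.
  assert (Hss := sqrt_sqrt s (Rlt_le _ _ Hs)).
  assert (H1 : Rabs (sqrt s * w) < sqrt (e + s * w ^ 2)).
  { rewrite <- (sqrt_Rsqr_abs (sqrt s * w)). apply sqrt_lt_1_alt. split; [apply Rle_0_sqr |].
    unfold Rsqr. replace (sqrt s * w * (sqrt s * w)) with (sqrt s * sqrt s * w ^ 2) by ring.
    rewrite Hss. lra. }
  apply Rabs_def2 in H1. lra.
Qed.

(* Ratio of the arcsinh antiderivative's arguments at the two endpoints:
   with r = sqrt s and S = sqrt (e + s L^2), (rL + S)(S - rL) = e, so the
   ratio is (rL + S)^2 / e <= 4 S^2 / e. *)
Lemma arcsinh_endpoint_ratio s e L : 0 < s -> 0 < e -> 0 <= L ->
  (sqrt s * L + sqrt (e + s * L ^ 2)) / (sqrt s * - L + sqrt (e + s * L ^ 2))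
    <= 4 + 4 * s * L ^ 2 / e.
Proof.
  intros Hs He HL.
  assert (HA := arcsinh_argument_pos s e L Hs He).
  assert (HB := arcsinh_argument_pos s e (- L) Hs He). replace ((- L) ^ 2) with (L ^ 2) in HB by ring.
  assert (Hss := sqrt_sqrt s (Rlt_le _ _ Hs)).
  assert (HS2 : sqrt (e + s * L ^ 2) * sqrt (e + s * L ^ 2) = e + s * L ^ 2)
    by (apply sqrt_sqrt; assert (0 <= L ^ 2) by apply pow2_ge_0; nra).
  set (r := sqrt s) in *. set (S := sqrt (e + s * L ^ 2)) in *.
  assert (HAB : (r * L + S) * (r * - L + S) = e).
  { replace ((r * L + S) * (r * - L + S)) with (S * S - r * r * L ^ 2) by ring. rewrite HS2, Hss. ring. }
  assert (HrL : r * L <= S).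
  { apply Rsqr_incr_0_var; [| apply sqrt_pos]. unfold Rsqr.
    replace (r * L * (r * L)) with (r * r * L ^ 2) by ring. rewrite Hss, HS2.
    assert (0 <= L ^ 2) by apply pow2_ge_0. lra. }
  apply Rmult_le_reg_r with (r * - L + S); auto.
  unfold Rdiv. rewrite Rmult_assoc, Rinv_l, Rmult_1_r by lra.
  apply Rmult_le_reg_r with (r * L + S); auto.
  replace ((4 + 4 * s * L ^ 2 * / e) * (r * - L + S) * (r * L + S)) with (4 * (e + s * L ^ 2))
    by (rewrite Rmult_assoc, (Rmult_comm (r * - L + S)), HAB; field; lra).
  rewrite <- HS2. assert (0 <= r * L) by (apply Rmult_le_pos; [apply sqrt_pos | lra]). nra.
Qed.

Lemma RInt_inv_sqrt_quadratic_bound s e c L : 0 < s -> 0 < e -> 0 <= L ->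
  RInt (fun u => / sqrt (e + s * (u - c) ^ 2)) (c - L) (c + L)
    <= ln (4 + 4 * s * L ^ 2 / e) / sqrt s.
Proof.
  intros Hs He HL.
  assert (Hss := sqrt_sqrt s (Rlt_le _ _ Hs)).
  assert (Hsp : 0 < sqrt s) by (apply sqrt_lt_R0; auto).
  assert (Hpos : forall w, 0 < e + s * w ^ 2)
    by (intro w; assert (0 <= w ^ 2) by apply pow2_ge_0; nra).
  rewrite (RInt_FTC (fun u => ln (sqrt s * (u - c) + sqrt (e + s * (u - c) ^ 2)) / sqrt s)).
  - replace (c + L - c) with L by ring. replace (c - L - c) with (- L) by ring.
    replace ((- L) ^ 2) with (L ^ 2) by ring.
    assert (HA := arcsinh_argument_pos s e L Hs He).
    assert (HB := arcsinh_argument_pos s e (- L) Hs He). replace ((- L) ^ 2) with (L ^ 2) in HB by ring.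
    unfold Rdiv. rewrite <- Rmult_minus_distr_r.
    apply Rmult_le_compat_r; [left; apply Rinv_0_lt_compat; auto |].
    rewrite <- ln_div by auto. apply ln_le; [apply Rdiv_lt_0_compat; auto |].
    apply arcsinh_endpoint_ratio; auto.
  - intros x _. assert (HP := arcsinh_argument_pos s e (x - c) Hs He).
    assert (HS : 0 < sqrt (e + s * (x - c) ^ 2)) by (apply sqrt_lt_R0; auto).
    auto_derive;
      replace ((x + - c) * ((x + - c) * 1)) with ((x - c) ^ 2) by ring;
      replace (x + - c) with (x - c) by ring; auto.
    set (S := sqrt (e + s * (x - c) ^ 2)) in *. set (r := sqrt s) in *.
    rewrite <- Hss. field. repeat split; apply Rgt_not_eq; auto.
  - intros x _. apply derivable_continuous. auto_derive.
    replace ((x + - c) * ((x + - c) * 1)) with ((x - c) ^ 2) by ring.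
    assert (0 < sqrt (e + s * (x - c) ^ 2)) by (apply sqrt_lt_R0; auto).
    repeat split; auto. apply Rgt_not_eq; auto.
Qed.

Section Phase.
Variables (K nu m c lam : R).
Hypothesis lam_pos : 0 < lam.

Definition phase t f := K * exp t * cos f + nu * t + m * f + c.
Definition phase_t t f := K * exp t * cos f + nu.
Definition phase_f t f := m - K * exp t * sin f.
Definition reg_norm t f := phase_t t f ^ 2 + phase_f t f ^ 2 + lam.

(* The vector field (flux_t, flux_f) = sin(phase) grad(phase) / reg_norm has
   divergence cos(phase) up to the remainder below. *)
Definition flux_t t f := phase_t t f * sin (phase t f) / reg_norm t f.
Definition flux_f t f := phase_f t f * sin (phase t f) / reg_norm t f.

Definition dflux_t t f :=
  (K * exp t * cos f * sin (phase t f) + phase_t t f ^ 2 * cos (phase t f)) / reg_norm t f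
  - phase_t t f * sin (phase t f)
    * (2 * phase_t t f * (K * exp t * cos f) - 2 * phase_f t f * (K * exp t * sin f))
    / reg_norm t f ^ 2.
Definition dflux_f t f :=
  (- K * exp t * cos f * sin (phase t f) + phase_f t f ^ 2 * cos (phase t f)) / reg_norm t f
  - phase_f t f * sin (phase t f)
    * (- 2 * phase_t t f * (K * exp t * sin f) - 2 * phase_f t f * (K * exp t * cos f))
    / reg_norm t f ^ 2.

Definition remainder t f :=
  lam * cos (phase t f) / reg_norm t f
  + sin (phase t f) * (2 * K * exp t
      * ((phase_t t f ^ 2 - phase_f t f ^ 2) * cos f - 2 * phase_t t f * phase_f t f * sin f))
    / reg_norm t f ^ 2.

Lemma reg_norm_pos t f : 0 < reg_norm t f.
Proof.
  unfold reg_norm.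
  assert (0 <= phase_t t f ^ 2) by apply pow2_ge_0.
  assert (0 <= phase_f t f ^ 2) by apply pow2_ge_0. lra.
Qed.

Lemma cos_phase_divergence t f : cos (phase t f) = dflux_t t f + dflux_f t f + remainder t f.
Proof.
  assert (H := reg_norm_pos t f). unfold dflux_t, dflux_f, remainder.
  field_simplify_eq; [| lra]. unfold reg_norm. ring.
Qed.

Ltac reg_norm_neq0 t f := match goal with |- ?a <> 0 =>
  replace a with (reg_norm t f) by (unfold reg_norm, phase_t, phase_f; ring);
  apply Rgt_not_eq, reg_norm_pos end.

Lemma is_derive_flux_t t f : is_derive (fun u => flux_t u f) t (dflux_t t f).
Proof.
  unfold flux_t, dflux_t, reg_norm, phase_t, phase_f, phase. auto_derive.
  - reg_norm_neq0 t f.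
  - field. repeat split; reg_norm_neq0 t f.
Qed.

Lemma is_derive_flux_f t f : is_derive (fun u => flux_f t u) f (dflux_f t f).
Proof.
  unfold flux_f, dflux_f, reg_norm, phase_t, phase_f, phase. auto_derive.
  - reg_norm_neq0 t f.
  - field. repeat split; reg_norm_neq0 t f.
Qed.

Ltac joint_continuity := intros x y;
  unfold flux_t, dflux_t, dflux_f, remainder, reg_norm, phase_t, phase_f, phase;
  continuity_2d; cbv beta; apply Rgt_not_eq; try apply pow_lt; exact (reg_norm_pos x y).

Lemma continuous_flux_t : forall x y, continuity_2d_pt flux_t x y.
Proof. joint_continuity. Qed.
Lemma continuous_dflux_t : forall x y, continuity_2d_pt dflux_t x y.
Proof. joint_continuity. Qed.
Lemma continuous_dflux_f : forall x y, continuity_2d_pt dflux_f x y.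
Proof. joint_continuity. Qed.
Lemma continuous_remainder : forall x y, continuity_2d_pt remainder x y.
Proof. joint_continuity. Qed.

Lemma ex_RInt_period (g : R -> R -> R) t :
  (forall x y, continuity_2d_pt g x y) -> ex_RInt (g t) 0 (2 * PI).
Proof. intro H. apply ex_RInt_cont. intros. apply continuous_section, H. Qed.

Lemma continuous_RInt_period (g : R -> R -> R) x :
  (forall x y, continuity_2d_pt g x y) -> continuous (fun t => RInt (g t) 0 (2 * PI)) x.
Proof.
  intro H. apply (continuous_RInt_param g 0 (2 * PI) x 1); [| lra | intros; apply H].
  assert (0 < PI) by apply PI_RGT_0. lra.
Qed.

Lemma ex_RInt_RInt_period (g : R -> R -> R) a b :
  (forall x y, continuity_2d_pt g x y) -> ex_RInt (fun t => RInt (g t) 0 (2 * PI)) a b.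
Proof. intro H. apply ex_RInt_cont. intros. apply continuous_RInt_period, H. Qed.

Lemma RInt_dflux_f (mz : Z) t : m = IZR mz -> RInt (dflux_f t) 0 (2 * PI) = 0.
Proof.
  intro Hm. rewrite (RInt_FTC (flux_f t)).
  - unfold flux_f, reg_norm, phase_t, phase_f, phase.
    rewrite cos_2PI, sin_2PI, cos_0, sin_0, Hm.
    replace (K * exp t * 1 + nu * t + IZR mz * (2 * PI) + c)
      with ((K * exp t * 1 + nu * t + IZR mz * 0 + c) + 2 * PI * IZR mz) by ring.
    rewrite sin_period_Z. apply Rminus_diag_eq. reflexivity.
  - intros f _. apply is_derive_flux_f.
  - intros f _. apply continuous_section, continuous_dflux_f.
Qed.

Lemma is_derive_RInt_flux_t t :
  is_derive (fun u => RInt (flux_t u) 0 (2 * PI)) t (RInt (dflux_t t) 0 (2 * PI)).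
Proof.
  replace (RInt (dflux_t t) 0 (2 * PI))
    with (RInt (fun f => Derive (fun u => flux_t u f) t) 0 (2 * PI)).
  - apply is_derive_RInt_param.
    + apply filter_forall. intros; eexists; apply is_derive_flux_t.
    + intros f _. apply continuity_2d_pt_ext with (f := dflux_t); [| apply continuous_dflux_t].
      intros; symmetry; apply is_derive_unique, is_derive_flux_t.
    + apply filter_forall. intros; apply ex_RInt_period, continuous_flux_t.
  - apply RInt_extR. intros; apply is_derive_unique, is_derive_flux_t.
Qed.

Lemma RInt_cos_phase (mz : Z) A B : m = IZR mz ->
  RInt (fun t => RInt (fun f => cos (phase t f)) 0 (2 * PI)) A B =
  RInt (flux_t B) 0 (2 * PI) - RInt (flux_t A) 0 (2 * PI)
  + RInt (fun t => RInt (remainder t) 0 (2 * PI)) A B.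
Proof.
  intro Hm.
  assert (Ht := ex_RInt_period dflux_t). assert (Hf := ex_RInt_period dflux_f).
  assert (Hr := ex_RInt_period remainder).
  transitivity (RInt (fun t => RInt (dflux_t t) 0 (2 * PI) + RInt (remainder t) 0 (2 * PI)) A B).
  - apply RInt_extR. intros t _.
    rewrite (RInt_extR _ (fun f => (dflux_t t f + dflux_f t f) + remainder t f))
      by (intros; apply cos_phase_divergence).
    rewrite (RInt_plusR (fun f => dflux_t t f + dflux_f t f)), RInt_plusR, (RInt_dflux_f mz) by
      (auto using continuous_dflux_t, continuous_dflux_f, continuous_remainder;
       apply (ex_RInt_plus (V:=R_NormedModule)); auto using continuous_dflux_t, continuous_dflux_f).
    ring.
  - rewrite RInt_plusR by (apply ex_RInt_RInt_period; auto using continuous_dflux_t, continuous_remainder).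
    f_equal. apply (RInt_FTC (fun u => RInt (flux_t u) 0 (2 * PI))).
    + intros; apply is_derive_RInt_flux_t.
    + intros; apply continuous_RInt_period, continuous_dflux_t.
Qed.

Lemma flux_t_bound t f : Rabs (flux_t t f) <= / sqrt (reg_norm t f).
Proof.
  assert (HN := reg_norm_pos t f). unfold flux_t.
  set (N := reg_norm t f) in *.
  assert (HsN : 0 < sqrt N) by (apply sqrt_lt_R0; auto).
  assert (HP : Rabs (phase_t t f) <= sqrt N).
  { rewrite <- sqrt_Rsqr_abs. apply sqrt_le_1_alt. unfold N, reg_norm, Rsqr.
    assert (0 <= phase_f t f ^ 2) by apply pow2_ge_0. nra. }
  assert (Hs : Rabs (sin (phase t f)) <= 1) by (apply Rabs_le, SIN_bound).
  unfold Rdiv. rewrite !Rabs_mult, (Rabs_pos_eq (/ N)) by (left; apply Rinv_0_lt_compat; auto).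
  apply Rle_trans with (sqrt N * / N).
  - apply Rmult_le_compat_r; [left; apply Rinv_0_lt_compat; auto |].
    rewrite <- (Rmult_1_r (sqrt N)). apply Rmult_le_compat; auto using Rabs_pos.
  - right. rewrite <- (sqrt_sqrt N) at 2 by lra. field. lra.
Qed.

Lemma rotation_bound P Q f :
  Rabs ((P ^ 2 - Q ^ 2) * cos f - 2 * P * Q * sin f) <= P ^ 2 + Q ^ 2.
Proof.
  assert (H1 := sin2_cos2 f). unfold Rsqr in H1.
  assert (E : (P ^ 2 + Q ^ 2) ^ 2 - ((P ^ 2 - Q ^ 2) * cos f - 2 * P * Q * sin f) ^ 2 =
              ((P ^ 2 - Q ^ 2) * sin f + 2 * P * Q * cos f) ^ 2).
  { apply Rminus_diag_uniq.
    transitivity ((P ^ 2 + Q ^ 2) ^ 2 * (1 - (sin f * sin f + cos f * cos f))); [ring |].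
    rewrite H1. ring. }
  assert (0 <= P ^ 2) by apply pow2_ge_0. assert (0 <= Q ^ 2) by apply pow2_ge_0.
  rewrite <- (Rabs_pos_eq (P ^ 2 + Q ^ 2)) by lra.
  apply Rsqr_le_abs_0. unfold Rsqr.
  assert (0 <= ((P ^ 2 - Q ^ 2) * sin f + 2 * P * Q * cos f) ^ 2) by apply pow2_ge_0. nra.
Qed.

Lemma remainder_bound t f : 0 <= K ->
  Rabs (remainder t f) <= (lam + 2 * K * exp t) / reg_norm t f.
Proof.
  intro HK. assert (HN := reg_norm_pos t f). assert (He := exp_pos t).
  unfold remainder.
  assert (HD := rotation_bound (phase_t t f) (phase_f t f) f).
  assert (HPQ : phase_t t f ^ 2 + phase_f t f ^ 2 <= reg_norm t f) by (unfold reg_norm; lra).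
  set (N := reg_norm t f) in *. set (D := (phase_t t f ^ 2 - phase_f t f ^ 2) * cos f
    - 2 * phase_t t f * phase_f t f * sin f) in *.
  assert (Hc : Rabs (cos (phase t f)) <= 1) by (apply Rabs_le, COS_bound).
  assert (Hs : Rabs (sin (phase t f)) <= 1) by (apply Rabs_le, SIN_bound).
  assert (HiN : 0 < / N) by (apply Rinv_0_lt_compat; auto).
  eapply Rle_trans; [apply Rabs_triang |].
  unfold Rdiv. rewrite !Rabs_mult, (Rabs_pos_eq lam), (Rabs_pos_eq (/ N)), (Rabs_pos_eq 2),
    (Rabs_pos_eq K), (Rabs_pos_eq (exp t)), (Rabs_pos_eq (/ N ^ 2)) by
    (try apply Rlt_le, Rinv_0_lt_compat, pow_lt; lra).
  replace (/ N ^ 2) with (/ N * / N) by (field; lra).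
  assert (Rabs D * / N <= 1).
  { apply Rmult_le_reg_r with N; auto. rewrite Rmult_assoc, Rinv_l by lra. lra. }
  assert (lam * Rabs (cos (phase t f)) * / N <= lam * / N).
  { rewrite Rmult_assoc, (Rmult_comm _ (/ N)), <- Rmult_assoc.
    rewrite <- (Rmult_1_r (lam * / N)) at 2. apply Rmult_le_compat_l; nra. }
  assert (Rabs (sin (phase t f)) * (2 * K * exp t * Rabs D) * (/ N * / N) <= 2 * K * exp t * / N).
  { replace (Rabs (sin (phase t f)) * (2 * K * exp t * Rabs D) * (/ N * / N))
      with (Rabs (sin (phase t f)) * (Rabs D * / N) * (2 * K * exp t * / N)) by ring.
    rewrite <- (Rmult_1_l (2 * K * exp t * / N)) at 2.
    apply Rmult_le_compat_r; [apply Rmult_le_pos; [nra | lra] |].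
    rewrite <- (Rmult_1_l 1). apply Rmult_le_compat; auto using Rabs_pos.
    apply Rmult_le_pos; [apply Rabs_pos | lra]. }
  lra.
Qed.

End Phase.

(* Lower bounds on the regularised norm when (nu, m) = K x0 (-cos phi0, sin phi0)
   and lambda = K^2 mu: the gradient of the phase vanishes only at the point
   (e^t, phi) = (x0, phi0), and reg_norm / K^2 is mu plus the squared
   distance between e^t e^{i phi} and x0 e^{i phi0}. *)
Section Geometry.
Variables (K nu m c x0 mu ph0 : R).
Hypothesis K_pos : 0 < K.
Hypothesis mu_pos : 0 < mu.
Hypothesis x0_range : 1 / 4 <= x0 <= 4.
Hypothesis nu_polar : nu = - K * x0 * cos ph0.
Hypothesis m_polar : m = K * x0 * sin ph0.

(* Squared distance |e^t e^{ip} - x0|^2. *)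
Definition gap t p := (exp t - x0) ^ 2 + 2 * x0 * exp t * (1 - cos p).

Lemma gap_nonneg t p : 0 <= gap t p.
Proof.
  unfold gap. assert (0 <= (exp t - x0) ^ 2) by apply pow2_ge_0.
  assert (H1 := COS_bound p). assert (0 < exp t) by apply exp_pos.
  assert (0 <= 2 * x0 * exp t * (1 - cos p)) by (repeat apply Rmult_le_pos; lra). lra.
Qed.

Lemma gap_lower t p : - PI <= p <= PI ->
  (exp t - x0) ^ 2 + x0 * exp t * p ^ 2 / 9 <= gap t p.
Proof.
  intros Hp. unfold gap. apply Rplus_le_compat_l.
  replace (x0 * exp t * p ^ 2 / 9) with (2 * x0 * exp t * (p ^ 2 / 18)) by field.
  assert (0 < exp t) by apply exp_pos.
  apply Rmult_le_compat_l; [nra | apply one_minus_cos_lower; auto].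
Qed.

Lemma lam_pos : 0 < K ^ 2 * mu.
Proof. apply Rmult_lt_0_compat; [apply pow_lt |]; auto. Qed.

Lemma reg_norm_polar t f : reg_norm K nu m (K ^ 2 * mu) t f = K ^ 2 * (gap t (f - ph0) + mu).
Proof.
  unfold reg_norm, phase_t, phase_f, gap. rewrite cos_minus, nu_polar, m_polar.
  assert (H1 := sin2_cos2 f). assert (H2 := sin2_cos2 ph0). unfold Rsqr in *.
  apply Rminus_diag_uniq.
  transitivity (K ^ 2 * exp t ^ 2 * (sin f * sin f + cos f * cos f - 1)
              + K ^ 2 * x0 ^ 2 * (sin ph0 * sin ph0 + cos ph0 * cos ph0 - 1)); [ring |].
  rewrite H1, H2. ring.
Qed.

(* A phi-integral dominated by a function h of reg_norm can be recentred at
   phi0, where the lower bound on the gap yields an explicit majorant k. *)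
Lemma RInt_period_abs_le (g : R -> R -> R) (h k : R -> R) t :
  (forall x y, continuity_2d_pt g x y) -> (forall y, 0 < y -> continuous h y) ->
  (forall p, continuous k p) ->
  (forall f, Rabs (g t f) <= h (reg_norm K nu m (K ^ 2 * mu) t f)) ->
  (forall p, - PI <= p <= PI -> h (K ^ 2 * (gap t p + mu)) <= k p) ->
  Rabs (RInt (g t) 0 (2 * PI)) <= RInt k (- PI) PI.
Proof.
  intros Hg Hh Hk Hle Hhk. assert (HPI := PI_RGT_0).
  set (hg := fun p => h (K ^ 2 * (gap t p + mu))).
  assert (Hhg : forall p, continuous hg p).
  { intro p. apply (continuous_comp (fun p => K ^ 2 * (gap t p + mu)) h).
    - apply derivable_continuous. unfold gap. auto_derive. auto.
    - apply Hh. assert (H := gap_nonneg t p). apply Rmult_lt_0_compat; [apply pow_lt |]; lra. }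
  eapply Rle_trans; [apply abs_RInt_le; [lra | apply ex_RInt_period; auto] |].
  eapply Rle_trans; [apply RInt_le with (g := fun f => hg (f - ph0)); [lra | | | ] |].
  - apply ex_RInt_cont. intros z _. apply (continuous_comp _ Rabs); [| apply continuous_Rabs].
    apply continuous_section, Hg.
  - apply ex_RInt_cont. intros z _. apply (continuous_comp (fun f => f - ph0) hg); auto.
    apply derivable_continuous. auto_derive. auto.
  - intros f _. unfold hg. rewrite <- reg_norm_polar. auto.
  - rewrite (RInt_periodic_shift hg); auto.
    + apply RInt_le; [lra | apply ex_RInt_cont; auto | apply ex_RInt_cont; auto |].
      intros; apply Hhk; lra.
    + intro p. unfold hg, gap. rewrite cos_plus, cos_2PI, sin_2PI.
      f_equal. f_equal. f_equal. f_equal. f_equal. ring.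
Qed.

Lemma boundary_flux_bound t : 1 / 8 <= exp t ->
  Rabs (RInt (flux_t K nu m c (K ^ 2 * mu) t) 0 (2 * PI))
    <= / K * (ln (4 + 4 * (1 / 288) * PI ^ 2 / mu) / sqrt (1 / 288)).
Proof.
  intro Het. assert (HPI := PI_RGT_0).
  assert (Hq : forall p, 0 < mu + 1 / 288 * (p - 0) ^ 2)
    by (intro p; assert (0 <= (p - 0) ^ 2) by apply pow2_ge_0; lra).
  assert (Hcq : forall p, continuous (fun p => / sqrt (mu + 1 / 288 * (p - 0) ^ 2)) p).
  { intro p. apply derivable_continuous. auto_derive.
    assert (0 <= (p - 0) * ((p - 0) * 1)) by nra.
    repeat split; try lra. apply Rgt_not_eq, sqrt_lt_R0. lra. }
  eapply Rle_trans.
  - apply (RInt_period_abs_le _ (fun y => / sqrt y)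
             (fun p => / K * / sqrt (mu + 1 / 288 * (p - 0) ^ 2))).
    + apply continuous_flux_t, lam_pos.
    + intros y Hy. apply derivable_continuous. auto_derive.
      repeat split; try lra. apply Rgt_not_eq, sqrt_lt_R0; lra.
    + intro p. apply continuous_scalR; auto.
    + intro f. apply flux_t_bound, lam_pos.
    + intros p Hp.
      assert (HX := gap_lower t p Hp). assert (H5 := gap_nonneg t p).
      assert (mu + 1 / 288 * (p - 0) ^ 2 <= gap t p + mu).
      { assert (0 <= (exp t - x0) ^ 2) by apply pow2_ge_0. assert (0 <= p ^ 2) by apply pow2_ge_0.
        assert (1 / 32 <= x0 * exp t) by nra.
        replace ((p - 0) ^ 2) with (p ^ 2) by ring. nra. }
      rewrite sqrt_mult, sqrt_pow2, Rinv_mult by (try apply pow2_ge_0; lra).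
      apply Rmult_le_compat_l; [left; apply Rinv_0_lt_compat; auto |].
      apply Rinv_le_contravar; [apply sqrt_lt_R0; auto | apply sqrt_le_1_alt; auto].
  - rewrite RInt_scalR by (apply ex_RInt_cont; auto).
    apply Rmult_le_compat_l; [left; apply Rinv_0_lt_compat; auto |].
    replace (- PI) with (0 - PI) by ring. replace PI with (0 + PI) at 2 by ring.
    apply RInt_inv_sqrt_quadratic_bound; lra.
Qed.

Lemma RInt_remainder_bound t : 1 / 8 <= exp t ->
  Rabs (RInt (remainder K nu m c (K ^ 2 * mu) t) 0 (2 * PI))
    <= (mu + 2 * exp t / K) * (PI / sqrt (((exp t - x0) ^ 2 + mu) * (x0 * exp t / 9))).
Proof.
  intro Het. assert (HPI := PI_RGT_0). assert (He := exp_pos t).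
  set (p0 := (exp t - x0) ^ 2 + mu). set (q := x0 * exp t / 9).
  assert (Hp0 : 0 < p0) by (unfold p0; assert (0 <= (exp t - x0) ^ 2) by apply pow2_ge_0; lra).
  assert (Hq : 0 < q) by (unfold q; apply Rdiv_lt_0_compat; [apply Rmult_lt_0_compat |]; lra).
  assert (Hcoef : 0 < mu + 2 * exp t / K)
    by (assert (0 < 2 * exp t / K) by (apply Rdiv_lt_0_compat; lra); lra).
  assert (Hden : forall p, 0 < p0 + q * p ^ 2) by (intro p; assert (0 <= p ^ 2) by apply pow2_ge_0; nra).
  assert (Hcd : forall p, continuous (fun p => / (p0 + q * p ^ 2)) p).
  { intro p. apply derivable_continuous. auto_derive. specialize (Hden p). simpl in Hden. lra. }
  eapply Rle_trans.
  - apply (RInt_period_abs_le _ (fun y => (K ^ 2 * mu + 2 * K * exp t) / y)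
             (fun p => (mu + 2 * exp t / K) * / (p0 + q * p ^ 2))).
    + apply continuous_remainder, lam_pos.
    + intros y Hy. apply derivable_continuous. auto_derive. lra.
    + intro p. apply continuous_scalR; auto.
    + intro f. apply remainder_bound; [apply lam_pos | lra].
    + intros p Hp.
      assert (HX := gap_lower t p Hp). assert (H5 := gap_nonneg t p).
      assert (p0 + q * p ^ 2 <= gap t p + mu) by (unfold p0, q; lra).
      replace ((K ^ 2 * mu + 2 * K * exp t) / (K ^ 2 * (gap t p + mu)))
        with ((mu + 2 * exp t / K) * / (gap t p + mu)) by (field; lra).
      apply Rmult_le_compat_l; [lra |]. apply Rinv_le_contravar; auto.
  - rewrite RInt_scalR by (apply ex_RInt_cont; auto).
    apply Rmult_le_compat_l; [lra |]. apply RInt_inv_quadratic_bound; auto.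
Qed.

End Geometry.

(* The t-profile of the remainder: the phi-integral of the remainder at time t
   is at most a multiple of [weight x0 mu t], whose integral over t is
   O(log(1/mu)) (a logarithmic peak at e^t = x0, exponential decay beyond). *)
Definition weight x0 mu t := sqrt (exp t) / sqrt ((exp t - x0) ^ 2 + mu).

Lemma sqrt_exp t : sqrt (exp t) = exp (t / 2).
Proof.
  replace (exp t) with (exp (t / 2) * exp (t / 2)) by (rewrite <- exp_plus; f_equal; field).
  apply sqrt_square. left; apply exp_pos.
Qed.

Lemma exp_5_ge : 32 <= exp 5.
Proof.
  assert (H := exp_ineq1_le 1).
  replace 5 with (1 + 1 + 1 + 1 + 1) by ring. rewrite !exp_plus.
  assert (4 <= exp 1 * exp 1) by nra.
  assert (8 <= exp 1 * exp 1 * exp 1) by nra.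
  assert (16 <= exp 1 * exp 1 * exp 1 * exp 1) by nra.
  nra.
Qed.

Section Weight.
Variables (x0 mu : R).
Hypothesis mu_pos : 0 < mu.
Hypothesis x0_range : 1 / 4 <= x0 <= 4.

Lemma weight_nonneg t : 0 <= weight x0 mu t.
Proof.
  unfold weight. apply Rmult_le_pos; [apply sqrt_pos |].
  left. apply Rinv_0_lt_compat, sqrt_lt_R0.
  assert (0 <= (exp t - x0) ^ 2) by apply pow2_ge_0. lra.
Qed.

Lemma weight_continuous t : continuous (weight x0 mu) t.
Proof.
  apply derivable_continuous. unfold weight. auto_derive.
  assert (H0 := pow2_ge_0 (exp t + - x0)). simpl in H0. assert (0 < exp t) by apply exp_pos.
  repeat split; try lra. apply Rgt_not_eq, sqrt_lt_R0; lra.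
Qed.

Lemma ex_RInt_weight a b : ex_RInt (weight x0 mu) a b.
Proof. apply ex_RInt_cont. intros; apply weight_continuous. Qed.

Lemma remainder_profile_le K t : 0 < K -> 1 / 8 <= exp t ->
  (mu + 2 * exp t / K) * (PI / sqrt (((exp t - x0) ^ 2 + mu) * (x0 * exp t / 9)))
    <= 6 * PI * (8 * mu + 2 / K) * weight x0 mu t.
Proof.
  intros HK Het. unfold weight.
  set (y := exp t) in *. set (p0 := (y - x0) ^ 2 + mu).
  assert (Hp0 : 0 < p0) by (unfold p0; assert (0 <= (y - x0) ^ 2) by apply pow2_ge_0; lra).
  set (s := sqrt y). assert (Hs : 0 < s) by (apply sqrt_lt_R0; lra).
  assert (Hss : s * s = y) by (apply sqrt_sqrt; lra).
  assert (HPI := PI_RGT_0).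
  assert (Hsx : s / 6 <= sqrt (x0 * y / 9)).
  { rewrite <- (sqrt_square (s / 6)) by lra. apply sqrt_le_1_alt. rewrite <- Hss.
    assert (0 <= (x0 - 1 / 4) * (s * s)) by (apply Rmult_le_pos; nra). lra. }
  rewrite sqrt_mult by (try apply Rmult_le_pos; try apply Rmult_le_pos; lra).
  set (r := sqrt p0). assert (Hr : 0 < r) by (apply sqrt_lt_R0; auto).
  apply Rle_trans with ((mu + 2 * y / K) * (PI / (r * (s / 6)))).
  - apply Rmult_le_compat_l; [assert (0 < 2 * y / K) by (apply Rdiv_lt_0_compat; lra); lra |].
    unfold Rdiv. apply Rmult_le_compat_l; [lra |]. apply Rinv_le_contravar; [nra |].
    apply Rmult_le_compat_l; lra.
  - (* mu / s <= 8 mu s because s^2 = e^t >= 1/8 *)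
    assert (mu / s <= 8 * mu * s).
    { apply Rmult_le_reg_r with s; auto. unfold Rdiv. rewrite Rmult_assoc, Rinv_l by lra. nra. }
    replace ((mu + 2 * y / K) * (PI / (r * (s / 6)))) with (6 * PI * (mu / s + 2 * s / K) * / r)
      by (rewrite <- Hss; field; lra).
    replace (6 * PI * (8 * mu + 2 / K) * (s / r)) with (6 * PI * (8 * mu * s + 2 * s / K) * / r)
      by (field; lra).
    apply Rmult_le_compat_r; [left; apply Rinv_0_lt_compat; auto |].
    apply Rmult_le_compat_l; lra.
Qed.

Lemma weight_far t : 2 * x0 <= exp t -> weight x0 mu t <= 2 * exp (- t / 2).
Proof.
  intro H. unfold weight. rewrite sqrt_exp.
  assert (He : exp t = exp (t / 2) * exp (t / 2)) by (rewrite <- exp_plus; f_equal; field).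
  assert (Hh := exp_pos (t / 2)).
  replace (exp (- t / 2)) with (/ exp (t / 2)) by (rewrite <- exp_Ropp; f_equal; field).
  assert (Hs : exp t / 2 <= sqrt ((exp t - x0) ^ 2 + mu)).
  { apply Rsqr_incr_0_var; [| apply sqrt_pos]. rewrite Rsqr_sqrt.
    - unfold Rsqr. nra.
    - assert (0 <= (exp t - x0) ^ 2) by apply pow2_ge_0. lra. }
  apply Rle_trans with (exp (t / 2) / (exp t / 2)).
  - unfold Rdiv. apply Rmult_le_compat_l; [lra |].
    apply Rinv_le_contravar; [assert (0 < exp t) by apply exp_pos; lra | auto].
  - right. rewrite He. field. lra.
Qed.

Lemma exp_gap_lower t : 1 / 8 <= exp t -> (t - ln x0) ^ 2 / 64 <= (exp t - x0) ^ 2.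
Proof.
  intro H1. set (t0 := ln x0). assert (Ex : exp t0 = x0) by (apply exp_ln; lra).
  destruct (Rle_or_lt t0 t).
  - assert (E : exp t = x0 * exp (t - t0)) by (rewrite <- Ex, <- exp_plus; f_equal; ring).
    assert (H3 := exp_ineq1_le (t - t0)).
    assert ((t - t0) / 4 <= exp t - x0) by nra.
    apply Rle_trans with (((t - t0) / 4) ^ 2); [assert (0 <= (t - t0) ^ 2) by apply pow2_ge_0; lra |].
    apply pow_incr; lra.
  - assert (E : x0 = exp t * exp (t0 - t)) by (rewrite <- Ex, <- exp_plus; f_equal; ring).
    assert (H3 := exp_ineq1_le (t0 - t)).
    assert ((t0 - t) / 8 <= x0 - exp t) by nra.
    replace ((t - t0) ^ 2) with ((t0 - t) ^ 2) by ring.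
    replace ((exp t - x0) ^ 2) with ((x0 - exp t) ^ 2) by ring.
    apply Rle_trans with (((t0 - t) / 8) ^ 2); [assert (0 <= (t0 - t) ^ 2) by apply pow2_ge_0; lra |].
    apply pow_incr; lra.
Qed.

Lemma weight_near t : 1 / 8 <= exp t -> exp t <= 2 * x0 ->
  weight x0 mu t <= 24 * / sqrt (64 * mu + 1 * (t - ln x0) ^ 2).
Proof.
  intros H1 H2. unfold weight.
  assert (Hd := exp_gap_lower t H1).
  assert (Hs3 : sqrt (exp t) <= 3) by (rewrite <- (sqrt_square 3) by lra; apply sqrt_le_1_alt; lra).
  assert (Hp : 0 < 64 * mu + 1 * (t - ln x0) ^ 2)
    by (assert (0 <= (t - ln x0) ^ 2) by apply pow2_ge_0; lra).
  assert (Hsp : 0 < sqrt (64 * mu + 1 * (t - ln x0) ^ 2)) by (apply sqrt_lt_R0; auto).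
  assert (Hq : sqrt (64 * mu + 1 * (t - ln x0) ^ 2) / 8 <= sqrt ((exp t - x0) ^ 2 + mu)).
  { replace (sqrt (64 * mu + 1 * (t - ln x0) ^ 2) / 8) with (sqrt ((64 * mu + 1 * (t - ln x0) ^ 2) / 64)).
    - apply sqrt_le_1_alt. lra.
    - rewrite sqrt_div_alt by lra. f_equal. replace 64 with (8 * 8) by ring. apply sqrt_square. lra. }
  apply Rle_trans with (3 / (sqrt (64 * mu + 1 * (t - ln x0) ^ 2) / 8)).
  - unfold Rdiv. apply Rmult_le_compat; auto; [apply sqrt_pos | |].
    + left; apply Rinv_0_lt_compat, sqrt_lt_R0. assert (0 <= (exp t - x0) ^ 2) by apply pow2_ge_0. lra.
    + apply Rinv_le_contravar; auto. lra.
  - right. field. lra.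
Qed.

Lemma RInt_weight_far a b : 1 / 8 <= exp a -> a <= b -> 2 * x0 <= exp a ->
  RInt (weight x0 mu) a b <= 12.
Proof.
  intros H1 H2 H3.
  eapply Rle_trans; [apply RInt_le with (g := fun t => 2 * exp (- t / 2)); auto | ].
  - apply ex_RInt_weight.
  - apply ex_RInt_cont. intros. apply derivable_continuous. auto_derive. auto.
  - intros t Ht. apply weight_far. assert (H5 := exp_le_mono a t ltac:(lra)). lra.
  - rewrite (RInt_FTC (fun t => -4 * exp (- t / 2))).
    + assert (exp (- b / 2) > 0) by apply exp_pos.
      assert (E : exp (- a / 2) = / sqrt (exp a))
        by (rewrite sqrt_exp, <- exp_Ropp; f_equal; field).
      assert (Hs : 1 / 3 <= sqrt (exp a))
        by (rewrite <- (sqrt_square (1 / 3)) by lra; apply sqrt_le_1_alt; lra).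
      assert (exp (- a / 2) <= 3)
        by (rewrite E; replace 3 with (/ (1 / 3)) by field; apply Rinv_le_contravar; lra).
      lra.
    + intros x _. auto_derive; auto. replace (- x / 2) with (- x * / 2) by reflexivity. lra.
    + intros x _. apply derivable_continuous. auto_derive. auto.
Qed.

Lemma RInt_weight_near a : 1 / 8 <= exp a -> a <= ln (2 * x0) ->
  RInt (weight x0 mu) a (ln (2 * x0)) <= 24 * ln (4 + 4 * 1 * 5 ^ 2 / (64 * mu)).
Proof.
  intros H1 H2.
  set (t0 := ln x0). assert (Ex : exp t0 = x0) by (apply exp_ln; lra).
  set (t1 := ln (2 * x0)) in *. assert (Ex1 : exp t1 = 2 * x0) by (apply exp_ln; lra).
  assert (E5 := exp_5_ge).
  (* the range [a, t1] lies within distance 5 of t0 *)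
  assert (Ha : t0 - 5 <= a).
  { destruct (Rle_or_lt (t0 - 5) a) as [ok | bad]; auto. apply exp_increasing in bad.
    unfold Rminus in bad. rewrite exp_plus, Ex, exp_Ropp in bad.
    assert (x0 * / exp 5 <= 4 / 32).
    { apply Rmult_le_compat; try lra; [left; apply Rinv_0_lt_compat; lra | apply Rinv_le_contravar; lra]. }
    lra. }
  assert (Hb : t1 <= t0 + 5).
  { destruct (Rle_or_lt t1 (t0 + 5)) as [ok | bad]; auto. apply exp_increasing in bad.
    rewrite exp_plus, Ex, Ex1 in bad. nra. }
  set (g := fun t => 24 * / sqrt (64 * mu + 1 * (t - t0) ^ 2)).
  assert (Hpos : forall t, 0 < 64 * mu + 1 * (t - t0) ^ 2)
    by (intro t; assert (0 <= (t - t0) ^ 2) by apply pow2_ge_0; lra).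
  assert (Hc : forall t, continuous (fun t => / sqrt (64 * mu + 1 * (t - t0) ^ 2)) t).
  { intro t. apply derivable_continuous. auto_derive. specialize (Hpos t). simpl in Hpos.
    replace (t + - t0) with (t - t0) by ring.
    repeat split; auto. apply Rgt_not_eq, sqrt_lt_R0; auto. }
  assert (Hcg : forall t, continuous g t) by (intro t; apply continuous_scalR; auto).
  eapply Rle_trans; [apply RInt_le with (g := g); auto | ].
  - apply ex_RInt_weight.
  - apply ex_RInt_cont; auto.
  - intros t Ht. apply weight_near.
    + assert (H5 := exp_le_mono a t ltac:(lra)). lra.
    + assert (H5 := exp_le_mono t t1 ltac:(lra)). lra.
  - eapply Rle_trans; [apply (RInt_nonneg_subinterval _ (t0 - 5) (t0 + 5)); auto; try lra |].
    + intros. left. apply Rmult_lt_0_compat; [lra |]. apply Rinv_0_lt_compat, sqrt_lt_R0; auto.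
    + unfold g. rewrite RInt_scalR by (apply ex_RInt_cont; auto). apply Rmult_le_compat_l; [lra |].
      assert (H := RInt_inv_sqrt_quadratic_bound 1 (64 * mu) t0 5 ltac:(lra) ltac:(lra) ltac:(lra)).
      rewrite sqrt_1, Rdiv_1_r in H. exact H.
Qed.

Lemma RInt_weight_bound A B : 1 / 8 <= exp A -> A <= B ->
  RInt (weight x0 mu) A B <= 24 * ln (4 + 4 * 1 * 5 ^ 2 / (64 * mu)) + 12.
Proof.
  intros H1 H2.
  set (t1 := ln (2 * x0)). assert (Ex1 : exp t1 = 2 * x0) by (apply exp_ln; lra).
  assert (Hl : 0 <= ln (4 + 4 * 1 * 5 ^ 2 / (64 * mu))).
  { rewrite <- ln_1. apply ln_le; [lra |].
    assert (0 < 4 * 1 * 5 ^ 2 / (64 * mu)) by (apply Rdiv_lt_0_compat; lra). lra. }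
  destruct (Rle_or_lt t1 A) as [HA | HA].
  - pose proof (RInt_weight_far A B H1 H2 ltac:(rewrite <- Ex1; apply exp_le_mono; auto)). lra.
  - eapply Rle_trans; [apply (RInt_nonneg_subinterval _ A (Rmax B t1)); try lra; [apply Rmax_l | | ] |].
    + intros; apply weight_continuous.
    + intros; apply weight_nonneg.
    + rewrite <- (RInt_ChaslesR _ A t1 (Rmax B t1)) by apply ex_RInt_weight.
      pose proof (RInt_weight_near A H1 ltac:(unfold t1 in HA; lra)).
      pose proof (RInt_weight_far t1 (Rmax B t1) ltac:(lra) ltac:(apply Rmax_r) ltac:(lra)).
      unfold t1 in *. lra.
Qed.

End Weight.

(* Explicit bound for the double integral of cos(phase): twice the boundary
   flux bound plus the integrated remainder bound. *)
Definition oscillatory_bound K mu :=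
  2 * (/ K * (ln (4 + 4 * (1 / 288) * PI ^ 2 / mu) / sqrt (1 / 288)))
  + 6 * PI * (8 * mu + 2 / K) * (24 * ln (4 + 4 * 1 * 5 ^ 2 / (64 * mu)) + 12).

Theorem RInt_cos_phase_bound K nu c x0 mu ph0 (m : Z) A B :
  0 < K -> 0 < mu -> 1 / 4 <= x0 <= 4 ->
  nu = - K * x0 * cos ph0 -> IZR m = K * x0 * sin ph0 ->
  1 / 8 <= exp A -> A <= B ->
  Rabs (RInt (fun t => RInt (fun f => cos (phase K nu (IZR m) c t f)) 0 (2 * PI)) A B)
    <= oscillatory_bound K mu.
Proof.
  intros HK Hmu Hx0 Hnu Hm HA HAB.
  assert (HL := lam_pos K mu HK Hmu).
  assert (Hexp : forall t, A <= t -> 1 / 8 <= exp t) by (intros t Ht; assert (H := exp_le_mono A t Ht); lra).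
  set (Cr := 6 * PI * (8 * mu + 2 / K)).
  assert (HCr : 0 <= Cr) by (unfold Cr; assert (HPI := PI_RGT_0);
    assert (0 < 2 / K) by (apply Rdiv_lt_0_compat; lra); nra).
  rewrite (RInt_cos_phase K nu (IZR m) c (K ^ 2 * mu) HL m A B eq_refl).
  assert (WB := boundary_flux_bound K nu (IZR m) c x0 mu ph0 HK Hmu Hx0 Hnu Hm B (Hexp B HAB)).
  assert (WA := boundary_flux_bound K nu (IZR m) c x0 mu ph0 HK Hmu Hx0 Hnu Hm A HA).
  assert (Hrem : Rabs (RInt (fun t => RInt (remainder K nu (IZR m) c (K ^ 2 * mu) t) 0 (2 * PI)) A B)
                 <= Cr * (24 * ln (4 + 4 * 1 * 5 ^ 2 / (64 * mu)) + 12)).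
  { eapply Rle_trans; [apply abs_RInt_le; auto; apply ex_RInt_RInt_period, continuous_remainder; auto |].
    eapply Rle_trans; [apply RInt_le with (g := fun t => Cr * weight x0 mu t); auto | ].
    - apply ex_RInt_cont. intros. apply (continuous_comp _ Rabs); [| apply continuous_Rabs].
      apply continuous_RInt_period, continuous_remainder; auto.
    - apply ex_RInt_cont. intros. apply continuous_scalR, weight_continuous; auto.
    - intros t Ht. eapply Rle_trans; [apply (RInt_remainder_bound K nu (IZR m) c x0 mu ph0) |];
        auto; try (apply Hexp; lra).
      apply remainder_profile_le; auto. apply Hexp; lra.
    - rewrite RInt_scalR by (apply ex_RInt_weight; auto).
      apply Rmult_le_compat_l; auto. apply RInt_weight_bound; auto. }
  unfold oscillatory_bound. fold Cr.
  eapply Rle_trans; [apply Rabs_triang |]. unfold Rminus.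
  eapply Rle_trans; [apply Rplus_le_compat_r, Rabs_triang |].
  rewrite Rabs_Ropp. lra.
Qed.

(* Argument of the integrand of I(a,b): e(2Rx cos f) e^{imf} x^{i nu} = e^{i theta}. *)
Definition theta R0 nu (m : Z) x f := 2 * PI * (2 * R0 * x * cos f) + IZR m * f + nu * ln x.

Lemma integrand_polar R0 nu m x f : 0 < x ->
  Cmult (Cmult (e (2 * R0 * x * cos f)) (Cexp (0, IZR m * f))) (Cpow_pos x (-1, nu))
  = (Rdiv (cos (theta R0 nu m x f)) x, Rdiv (sin (theta R0 nu m x f)) x).
Proof.
  intro Hx. unfold e, Cpow_pos, Cexp, Cmult, RtoC, theta. simpl.
  replace (-1 * ln x - nu * 0) with (- ln x) by ring.
  replace (-1 * 0 + nu * ln x) with (nu * ln x) by ring.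
  rewrite exp_Ropp, exp_ln, exp_0 by auto.
  set (A := 2 * PI * (2 * R0 * x * cos f)). set (B := IZR m * f). set (G := nu * ln x).
  repeat rewrite ?cos_plus, ?sin_plus. clearbody A B G.
  apply injective_projections; simpl; unfold Rdiv; ring.
Qed.

Lemma RInt_C_pair (f1 f2 : R -> R) a b : ex_RInt f1 a b -> ex_RInt f2 a b ->
  @RInt C_R_CompleteNormedModule (fun t => (f1 t, f2 t)) a b = (RInt f1 a b, RInt f2 a b).
Proof.
  intros H1 H2. apply is_RInt_unique.
  apply (is_RInt_fct_extend_pair (U:=R_NormedModule) (V:=R_NormedModule) (fun t => (f1 t, f2 t)));
    simpl; apply (RInt_correct (V:=R_CompleteNormedModule)); auto.
Qed.

Section LogCoordinates.
Variables (R0 nu : R) (m : Z).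

Definition angular_part (h : R -> R) x := RInt (fun f => h (theta R0 nu m x f) / x) 0 (2 * PI).

Lemma continuous_component (h : R -> R) y f : (forall z, continuity_pt h z) -> 0 < y ->
  continuity_2d_pt (fun u v => h (theta R0 nu m u v) / u) y f.
Proof.
  intros Hh Hy. unfold theta. apply c2_div; [| apply continuity_2d_pt_id1 | lra].
  apply continuity_1d_2d_pt_comp; auto. apply continuity_2d_pt_plus; [continuity_2d |].
  apply continuity_2d_pt_mult; [continuity_2d |].
  apply continuity_1d_2d_pt_comp; [| continuity_2d].
  apply continuity_pt_filterlim, continuous_ln. exact Hy.
Qed.

Lemma continuous_angular_part (h : R -> R) x : (forall z, continuity_pt h z) -> 0 < x ->
  continuous (angular_part h) x.
Proof.
  intros Hh Hx. apply (continuous_RInt_param _ 0 (2 * PI) x (x / 2)).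
  - assert (H := PI_RGT_0). lra.
  - lra.
  - intros y t Hy _. apply continuous_component; auto. apply Rabs_lt_between in Hy. lra.
Qed.

Lemma ex_RInt_component (h : R -> R) x : (forall z, continuity_pt h z) -> 0 < x ->
  ex_RInt (fun f => h (theta R0 nu m x f) / x) 0 (2 * PI).
Proof.
  intros Hh Hx. apply ex_RInt_cont. intros.
  apply (continuous_section (fun u v => h (theta R0 nu m u v) / u)), continuous_component; auto.
Qed.

Lemma Iab_components a b : 0 < a -> a <= b ->
  Iab R0 nu m a b = (RInt (angular_part cos) a b, RInt (angular_part sin) a b).
Proof.
  intros Ha Hab. unfold Iab.
  assert (Hx : forall x, Rmin a b <= x <= Rmax a b -> 0 < x)
    by (intros x Hx; rewrite Rmin_left in Hx; lra).
  rewrite <- RInt_C_pair by (apply ex_RInt_cont; intros;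
    apply continuous_angular_part; auto using continuity_cos, continuity_sin).
  apply (RInt_ext (V:=C_R_CompleteNormedModule)). intros x Hx'.
  assert (0 < x) by (rewrite Rmin_left in Hx'; lra).
  unfold angular_part.
  rewrite <- RInt_C_pair by (apply ex_RInt_component; auto using continuity_cos, continuity_sin).
  apply (RInt_ext (V:=C_R_CompleteNormedModule)). intros f _. apply integrand_polar. lra.
Qed.

Lemma angular_part_log (h : R -> R) cc a b :
  (forall z, continuity_pt h z) -> (forall z, h z = cos (z + cc)) -> 0 < a -> a <= b ->
  RInt (angular_part h) a b
    = RInt (fun t => RInt (fun f => cos (phase (4 * PI * R0) nu (IZR m) cc t f)) 0 (2 * PI)) (ln a) (ln b).
Proof.
  intros Hc Hcc Ha Hab.
  rewrite <- (exp_ln a) at 1 by lra. rewrite <- (exp_ln b) at 1 by lra.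
  rewrite <- (RInt_comp (V:=R_CompleteNormedModule) (angular_part h) exp exp).
  - apply RInt_extR. intros t _. unfold scal; simpl; unfold mult; simpl. unfold angular_part.
    rewrite <- RInt_scalR by (apply ex_RInt_component; auto; apply exp_pos).
    apply RInt_extR. intros f _. rewrite Hcc. unfold theta, phase. rewrite ln_exp.
    field_simplify; [| apply Rgt_not_eq, exp_pos]. f_equal. f_equal. ring.
  - intros. apply continuous_angular_part; auto. apply exp_pos.
  - intros. split; [apply is_derive_exp | apply derivable_continuous; auto_derive; auto].
Qed.

End LogCoordinates.

Lemma polar_coordinates r u v : 0 < r -> r * r = u ^ 2 + v ^ 2 ->
  exists ph, u = - r * cos ph /\ v = r * sin ph.
Proof.
  intros Hr Hrr.
  destruct (unit_circle_angle (- u / r) (v / r)) as [ph [Hc Hs]].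
  { replace (- u / r * (- u / r) + v / r * (v / r)) with ((u ^ 2 + v ^ 2) / (r * r)) by (field; lra).
    rewrite <- Hrr. field. lra. }
  exists ph. rewrite Hc, Hs. split; field; lra.
Qed.

(* The absolute constant of the theorem is twice this one (real and
   imaginary parts); it dominates R0 / ln R0 times [oscillatory_bound] with
   K = 4 pi R0 and mu = 1 / R0. *)
Definition final_constant := 6 / (4 * PI * sqrt (1 / 288)) + 6 * PI * (8 + 1 / (2 * PI)) * 96.

Lemma final_constant_pos : 0 < final_constant.
Proof.
  unfold final_constant. assert (HPI := PI_RGT_0).
  assert (Hs : 0 < sqrt (1 / 288)) by (apply sqrt_lt_R0; lra).
  assert (0 < 6 / (4 * PI * sqrt (1 / 288))) by (apply Rdiv_lt_0_compat; nra).
  assert (0 < 1 / (2 * PI)) by (apply Rdiv_lt_0_compat; lra). nra.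
Qed.

Lemma ln_affine_le a R0 : 2 <= R0 -> 0 <= a <= 2 -> ln (4 + a * R0) <= 3 * ln R0.
Proof.
  intros HR Ha.
  assert (Hl2 := ln_lt_2). assert (HL2 : ln 2 <= ln R0) by (apply ln_le; lra).
  assert (Hln4 : ln 4 = 2 * ln 2) by (replace 4 with (2 * 2) by ring; rewrite ln_mult by lra; ring).
  apply Rle_trans with (ln (4 * R0)).
  - apply ln_le; nra.
  - rewrite ln_mult by lra. lra.
Qed.

Lemma oscillatory_bound_le R0 : 2 <= R0 ->
  oscillatory_bound (4 * PI * R0) (/ R0) <= final_constant * ln R0 / R0.
Proof.
  intro HR.
  assert (HPI := PI_RGT_0). assert (HP4 := PI_4).
  set (L := ln R0).
  assert (Hs : 0 < sqrt (1 / 288)) by (apply sqrt_lt_R0; lra).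
  assert (HP16 : PI ^ 2 <= 16) by (simpl; nra).
  assert (l1 : ln (4 + 4 * (1 / 288) * PI ^ 2 / / R0) <= 3 * L).
  { replace (4 * (1 / 288) * PI ^ 2 / / R0) with (PI ^ 2 / 72 * R0) by (field; lra).
    apply ln_affine_le; auto. split; [apply Rmult_le_pos |]; nra. }
  assert (l2 : ln (4 + 4 * 1 * 5 ^ 2 / (64 * / R0)) <= 3 * L).
  { replace (4 * 1 * 5 ^ 2 / (64 * / R0)) with (100 / 64 * R0) by (field; lra).
    apply ln_affine_le; lra. }
  unfold oscillatory_bound, final_constant.
  assert (T1 : 2 * (/ (4 * PI * R0) * (ln (4 + 4 * (1 / 288) * PI ^ 2 / / R0) / sqrt (1 / 288)))
               <= 6 / (4 * PI * sqrt (1 / 288)) * L / R0).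
  { apply Rle_trans with (2 * (/ (4 * PI * R0) * (3 * L / sqrt (1 / 288)))).
    - apply Rmult_le_compat_l; [lra |]. apply Rmult_le_compat_l; [left; apply Rinv_0_lt_compat; nra |].
      unfold Rdiv. apply Rmult_le_compat_r; [left; apply Rinv_0_lt_compat |]; auto.
    - right. field. lra. }
  assert (T2 : 6 * PI * (8 * / R0 + 2 / (4 * PI * R0)) * (24 * ln (4 + 4 * 1 * 5 ^ 2 / (64 * / R0)) + 12)
               <= 6 * PI * (8 + 1 / (2 * PI)) * 96 * L / R0).
  { assert (HL2 : ln 2 <= L) by (apply ln_le; lra). assert (Hl2 := ln_lt_2).
    apply Rle_trans with (6 * PI * (8 * / R0 + 2 / (4 * PI * R0)) * (96 * L)).
    - apply Rmult_le_compat_l; [| lra].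
      assert (0 < 8 * / R0) by (apply Rmult_lt_0_compat; [lra | apply Rinv_0_lt_compat; lra]).
      assert (0 < 2 / (4 * PI * R0)) by (apply Rdiv_lt_0_compat; nra). nra.
    - right. field. lra. }
  replace ((6 / (4 * PI * sqrt (1 / 288)) + 6 * PI * (8 + 1 / (2 * PI)) * 96) * L / R0)
    with (6 / (4 * PI * sqrt (1 / 288)) * L / R0 + 6 * PI * (8 + 1 / (2 * PI)) * 96 * L / R0)
    by (field; lra).
  lra.
Qed.

Lemma Cmod_le_sum (x y : R) : Cmod (x, y) <= Rabs x + Rabs y.
Proof.
  unfold Cmod. simpl.
  rewrite <- (sqrt_square (Rabs x + Rabs y)) by (assert (H1 := Rabs_pos x); assert (H2 := Rabs_pos y); lra).
  apply sqrt_le_1_alt.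
  assert (Ex := Rsqr_abs x). assert (Ey := Rsqr_abs y). unfold Rsqr in *.
  assert (H1 := Rabs_pos x). assert (H2 := Rabs_pos y). nra.
Qed.

Lemma angular_part_bound R0 nu (m : Z) x0 ph0 (h : R -> R) cc a b :
  2 <= R0 -> 1 / 4 <= x0 <= 4 ->
  nu = - (4 * PI * R0) * x0 * cos ph0 -> IZR m = 4 * PI * R0 * x0 * sin ph0 ->
  (forall z, continuity_pt h z) -> (forall z, h z = cos (z + cc)) ->
  1 / 8 <= a -> a < b ->
  Rabs (RInt (angular_part R0 nu m h) a b) <= oscillatory_bound (4 * PI * R0) (/ R0).
Proof.
  intros HR Hx0 Hnu Hm Hh Hcc Ha Hab. assert (HPI := PI_RGT_0).
  rewrite (angular_part_log R0 nu m h cc) by (auto; lra).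
  apply (RInt_cos_phase_bound _ _ _ x0 _ ph0); auto.
  - nra.
  - apply Rinv_0_lt_compat; lra.
  - rewrite exp_ln; lra.
  - apply ln_le; lra.
Qed.

Theorem mainTheorem12 :
  exists K : R, 0 < K /\
    forall (R0 nu : R) (m : Z),
      2 <= R0 ->
      1 / 4 <= sqrt (nu ^ 2 + IZR m ^ 2) / (4 * PI * R0) <= 4 ->
      forall a b : R, 1 / 8 <= a -> a < b ->
        Cmod (Iab R0 nu m a b) <= K * ln R0 / R0.
Proof.
  exists (2 * final_constant). split; [assert (H := final_constant_pos); lra |].
  intros R0 nu m HR Hx0 a b Ha Hab. assert (HPI := PI_RGT_0).
  set (x0 := sqrt (nu ^ 2 + IZR m ^ 2) / (4 * PI * R0)) in *.
  destruct (polar_coordinates (4 * PI * R0 * x0) nu (IZR m)) as [ph0 [Hnu Hm]].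
  { apply Rmult_lt_0_compat; [nra | lra]. }
  { replace (4 * PI * R0 * x0) with (sqrt (nu ^ 2 + IZR m ^ 2)) by (unfold x0; field; lra).
    apply sqrt_sqrt. assert (0 <= nu ^ 2) by apply pow2_ge_0. assert (0 <= IZR m ^ 2) by apply pow2_ge_0. lra. }
  replace (- (4 * PI * R0 * x0)) with (- (4 * PI * R0) * x0) in Hnu by ring.
  rewrite Iab_components by lra.
  eapply Rle_trans; [apply Cmod_le_sum |].
  assert (Hre := angular_part_bound R0 nu m x0 ph0 cos 0 a b HR Hx0 Hnu Hm continuity_cos
    ltac:(intro z; rewrite Rplus_0_r; reflexivity) Ha Hab).
  assert (Him := angular_part_bound R0 nu m x0 ph0 sin (- (PI / 2)) a b HR Hx0 Hnu Hm continuity_sin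
    ltac:(intro z; replace (z + - (PI / 2)) with (- (PI / 2 - z)) by ring;
          rewrite cos_neg, cos_shift; reflexivity) Ha Hab).
  assert (Hfin := oscillatory_bound_le R0 HR).
  unfold Rdiv in *. lra.
Qed.
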